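(* For all constants $K_1,K_2>0$ there is a constant $c=c(K_1,K_2)>0$ such that the following holds. Let $A$ be a set of $N$ positive integers and let $g=\gcd(A)$ be the greatest common divisor of all elements of $A$. Suppose that $a/g<N^{K_1}$ for every $a\in A$, that $A\subseteq B.B=\{bb': b,b'\in B\}$ for some finite set $B$ of integers, and that $$\omega\Big(\prod_{a\in A}\frac{a}{g},\,K_2N\Big)\ge M.$$ Then $|B|\ge cM$.
   Context: For a natural number $m$ and a real number $x$, $\omega(m,x)$ denotes the number of distinct prime factors $p$ of $m$ with $p\ge x$. *)

From Stdlib Require Export Reals.
From mathcomp Require Export all_boot all_order all_algebra.

Definition omega (m : nat) (x : R) : nat :=
  size [seq p <- primes m | if Rle_dec x (INR p) then true else false].

(* gcd of all elements of a finite list of naturals (gcd of empty list = 0). *)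
Definition gcd_seq (A : seq nat) : nat := \big[gcdn/0%N]_(a <- A) a.

From Stdlib Require Import Lra.
Import GRing.Theory Num.Theory.

Set Implicit Arguments.
Unset Strict Implicit.

(* Write every a in A as b b' with b, b' in B, and let W be the |A| x |B|
   rational matrix whose row for a is e_b + e_b'.  For a prime p, the vector
   u_b = v_p(b) - v_p(g)/2 satisfies (W u)_a = v_p(a/g).  Pick rank W <= |B|
   rows spanning the row space of W: if p divides none of the corresponding
   quotients a/g, then W u vanishes on these rows, hence everywhere, so p
   divides no a/g at all.  Thus the large primes of prod a/g are those of at
   most |B| quotients a/g, and each a/g < N^K1 has at most
   2 K1 + 2 K1 |ln K2| / ln 2 prime factors >= K2 N. *)

Lemma prod_uniq_primes_dvd (s : seq nat) (m : nat) :
  uniq s -> {subset s <= primes m} -> (\prod_(p <- s) p %| m)%N.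
Proof.
elim: s => [|p s IHs] /=; first by rewrite big_nil dvd1n.
case/andP=> p_notin_s s_uniq sub_s; rewrite big_cons.
have sub_s' : {subset s <= primes m} by move=> q qs; rewrite sub_s // inE qs orbT.
have := sub_s p (mem_head _ _); rewrite mem_primes => /and3P[p_pr _ p_dvd_m].
rewrite Gauss_dvd ?p_dvd_m ?IHs // prime_coprime // Euclid_dvd_prod // big_has.
apply/hasP=> -[q qs]; have := sub_s' q qs; rewrite mem_primes => /and3P[q_pr _ _].
by rewrite dvdn_prime2 // => /eqP p_eq_q; rewrite p_eq_q qs in p_notin_s.
Qed.

Lemma mem_primes_prod (I : eqType) (r : seq I) (f : I -> nat) (p : nat) :
  p \in primes (\prod_(i <- r) f i) -> exists2 i, i \in r & p \in primes (f i).
Proof.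
rewrite mem_primes => /and3P[p_pr prod_gt0].
rewrite Euclid_dvd_prod // big_has => /hasP[i ir p_dvd_fi].
exists i => //; rewrite mem_primes p_pr p_dvd_fi andbT.
by move: prod_gt0; rewrite (big_rem i) //= muln_gt0 => /andP[].
Qed.

Lemma omega_le_sum (I : eqType) (r : seq I) (f : I -> nat) (m : nat) (x : R) :
  (forall p, p \in primes m -> exists2 i, i \in r & p \in primes (f i)) ->
  (omega m x <= \sum_(i <- r) omega (f i) x)%N.
Proof.
move=> cover; rewrite /omega.
pose large n := [seq p <- primes n | if Rle_dec x (INR p) then true else false].
rewrite -/(large m) (eq_bigr (fun i => size (large (f i)))) //.
rewrite -(big_map (fun i => size (large (f i))) xpredT id) -sumnE.
rewrite (map_comp size (fun i => large (f i))) -size_flatten.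
apply: uniq_leq_size; first by rewrite filter_uniq // primes_uniq.
move=> p; rewrite mem_filter => /andP[x_le_p /cover[i ir p_fi]].
by apply/flatten_mapP; exists i => //; rewrite mem_filter x_le_p.
Qed.

Local Open Scope R_scope.

Lemma pow_size_le_INR_prod (s : seq nat) (y : R) : 0 <= y ->
  (forall q, q \in s -> y <= INR q) -> y ^ size s <= INR (\prod_(q <- s) q).
Proof.
move=> y_ge0; elim: s => [|q s IHs] le_y /=; first by rewrite big_nil /=; lra.
rewrite big_cons -multE mult_INR; apply: Rmult_le_compat.
- exact: y_ge0.
- exact: pow_le.
- by apply: le_y; rewrite mem_head.
- by apply: IHs => z zs; apply: le_y; rewrite inE zs orbT.
Qed.

Lemma pow_omega_le (m : nat) (x : R) : (0 < m)%N -> Rmax 2 x ^ omega m x <= INR m.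
Proof.
move=> m_gt0; rewrite /omega; set s := [seq p <- primes m | _].
apply: Rle_trans (pow_size_le_INR_prod _ _) _.
- by apply: Rle_trans (Rmax_l 2 x); lra.
- move=> q; rewrite mem_filter; case: Rle_dec => //= x_le_q.
  rewrite mem_primes => /and3P[q_pr _ _]; apply: Rmax_lub => //.
  by apply: (le_INR 2); apply/leP; apply: prime_gt1.
apply/le_INR/leP/dvdn_leq => //; apply: prod_uniq_primes_dvd.
  by rewrite filter_uniq // primes_uniq.
by move=> q; rewrite mem_filter => /andP[].
Qed.

Definition omega_bound (K1 K2 : R) : R := 2 * K1 + 2 * K1 * Rabs (ln K2) / ln 2.

Lemma ln_le (x y : R) : 0 < x -> x <= y -> ln x <= ln y.
Proof. by move=> x_gt0 [lt_xy | ->]; [left; apply: ln_increasing | right]. Qed.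

Lemma ln2_gt0 : 0 < ln 2.
Proof. by rewrite -ln_1; apply: ln_increasing; lra. Qed.

Lemma omega_bound_ge (K1 K2 : R) : 0 <= K1 -> 2 * K1 <= omega_bound K1 K2.
Proof.
move=> K1_ge0; rewrite /omega_bound /Rdiv.
have : 0 <= 2 * K1 * Rabs (ln K2) * / ln 2.
  by apply: Rmult_le_pos; [have := Rabs_pos (ln K2); nra | apply/Rlt_le/Rinv_0_lt_compat/ln2_gt0].
lra.
Qed.

(* Either ln N <= 2 |ln K2|, and ln y >= ln 2 bounds s; or ln y >= (ln N) / 2. *)
Lemma log_ineq_le_omega_bound (s K1 K2 lnN lny : R) : 0 < K1 -> 0 <= s -> 0 <= lnN ->
  ln 2 <= lny -> ln K2 + lnN <= lny -> s * lny < K1 * lnN -> s <= omega_bound K1 K2.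
Proof.
move=> K1_gt0 s_ge0 lnN_ge0 ln2_le ln_sum_le lt_s.
have := ln2_gt0; have := Rabs_pos (ln K2); have := Rle_abs (- ln K2).
rewrite Rabs_Ropp /omega_bound => le_abs abs_ge0 ln2_gt0.
set X := 2 * K1 * Rabs (ln K2) / ln 2.
have X_ln2 : X * ln 2 = 2 * K1 * Rabs (ln K2) by rewrite /X; field; lra.
case: (Rle_dec lnN (2 * Rabs (ln K2))) => [small | big].
  have : s * ln 2 <= s * lny by apply: Rmult_le_compat_l.
  have : s * ln 2 < X * ln 2 by nra.
  nra.
have : s * (lnN / 2) <= s * lny by apply: Rmult_le_compat_l; lra.
have : s * lnN < 2 * K1 * lnN by nra.
move=> /Rmult_lt_reg_r lt_2K1 _; have := lt_2K1 ltac:(lra).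
have := omega_bound_ge K2 (Rlt_le _ _ K1_gt0); rewrite /omega_bound -/X; lra.
Qed.

Lemma omega_le_omega_bound (K1 K2 : R) (N m : nat) : 0 < K1 -> 0 < K2 ->
  (0 < N)%N -> (0 < m)%N -> INR m < Rpower (INR N) K1 ->
  INR (omega m (K2 * INR N)) <= omega_bound K1 K2.
Proof.
move=> K1_gt0 K2_gt0 N_gt0 m_gt0 m_lt.
set y := Rmax 2 (K2 * INR N).
have N_ge1 : 1 <= INR N by apply: (le_INR 1); apply/leP.
have y_ge2 : 2 <= y by apply: Rmax_l.
have lt_pow : y ^ omega m (K2 * INR N) < Rpower (INR N) K1.
  exact: Rle_lt_trans (pow_omega_le _ m_gt0) m_lt.
have := ln_increasing _ _ (pow_lt _ _ (Rlt_le_trans 0 2 y ltac:(lra) y_ge2)) lt_pow.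
rewrite ln_pow; last lra.
rewrite /Rpower ln_exp => lt_ln.
apply: log_ineq_le_omega_bound lt_ln => //.
- exact: pos_INR.
- by rewrite -ln_1; apply: ln_le; lra.
- by apply: ln_le; lra.
- rewrite -ln_mult //; last lra.
  by apply: ln_le; [apply: Rmult_lt_0_compat; lra | apply: Rmax_r].
Qed.

Local Close Scope R_scope.
Local Open Scope ring_scope.

Lemma mulmx_eq0_maxrowsub (F : fieldType) (m n p : nat) (W : 'M[F]_(m, n))
    (u : 'M_(n, p)) :
  rowsub (maxrankfun W) (W *m u) = 0 -> W *m u = 0.
Proof.
rewrite -mul_rowsub_mx => sub_eq0.
have /submxP[D ->] : (W <= rowsub (maxrankfun W) W)%MS by rewrite eq_maxrowsub.
by rewrite -mulmxA sub_eq0 mulmx0.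
Qed.

Section FactorMatrix.

Variables (A : seq nat) (B : seq int) (g : nat).
Hypothesis A_gt0 : {in A, forall a, (0 < a)%N}.
Hypothesis g_dvdA : {in A, forall a, (g %| a)%N}.
Variable f : 'I_(size A) -> 'I_(size B) * 'I_(size B).
Hypothesis A_factor : forall i : 'I_(size A), (nth 0%N A i)%:Z = B`_(f i).1 * B`_(f i).2.

Local Notation a_ i := (nth 0%N A i).
Local Notation b_ j := (absz B`_j).

Definition factor_mx : 'M[rat]_(size A, size B) :=
  \matrix_i ('e_(f i).1 + 'e_(f i).2).

Definition valuation_vec (p : nat) : 'cV[rat]_(size B) :=
  \col_j ((logn p (b_ j))%:R - (logn p g)%:R / 2).

Lemma factor_mx_valuation (p : nat) (i : 'I_(size A)) :
  (factor_mx *m valuation_vec p) i 0 = (logn p (a_ i %/ g))%:R.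
Proof.
have a_i_A : a_ i \in A by apply: mem_nth.
have a_gt0 := A_gt0 a_i_A; have g_dvd := g_dvdA a_i_A.
have g_gt0 : (0 < g)%N := dvdn_gt0 a_gt0 g_dvd.
have abs_factor : a_ i = (b_ (f i).1 * b_ (f i).2)%N.
  by rewrite -abszM -(A_factor i).
have /andP[b1_gt0 b2_gt0] : (0 < b_ (f i).1)%N && (0 < b_ (f i).2)%N.
  by rewrite -muln_gt0 -abs_factor.
have logn_factor : (logn p (b_ (f i).1) + logn p (b_ (f i).2)
                    = logn p g + logn p (a_ i %/ g))%N.
  have ag_gt0 : (0 < a_ i %/ g)%N by rewrite divn_gt0 // dvdn_leq.
  by rewrite -lognM // -abs_factor -lognM // mulnC divnK.
transitivity (row i (factor_mx *m valuation_vec p) 0 0); first by rewrite [RHS]mxE.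
rewrite row_mul rowK mulmxDl -!rowE !mxE addrACA -opprD -splitr -natrD.
by rewrite logn_factor natrD addrAC subrr add0r.
Qed.

Definition pivot_elements : seq nat :=
  [seq a_ (maxrankfun factor_mx k) | k <- enum 'I_(\rank factor_mx)].

Lemma size_pivot_elements : (size pivot_elements <= size B)%N.
Proof. by rewrite size_map size_enum_ord rank_leq_col. Qed.

Lemma pivot_elements_sub : {subset pivot_elements <= A}.
Proof. by move=> _ /mapP[k _ ->]; apply: mem_nth. Qed.

Lemma pivot_elements_cover (a p : nat) : a \in A -> p \in primes (a %/ g) ->
  exists2 a', a' \in pivot_elements & p \in primes (a' %/ g).
Proof.
move=> aA p_a; apply/hasP; apply: contraT => /hasPn p_not_pivot.
have i_lt : (index a A < size A)%N by rewrite index_mem.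
pose i : 'I_(size A) := Ordinal i_lt.
have pivot_eq0 : rowsub (maxrankfun factor_mx) (factor_mx *m valuation_vec p) = 0.
  apply/matrixP=> k j; rewrite [LHS]mxE [RHS]mxE (ord1 j) factor_mx_valuation.
  have := p_not_pivot _ (map_f _ (mem_enum _ k)); rewrite -logn_gt0 -eqn0Ngt.
  by move/eqP->.
have := factor_mx_valuation p i; rewrite mulmx_eq0_maxrowsub // mxE /= nth_index //.
by move/esym/eqP; rewrite pnatr_eq0 => /eqP logn_eq0; move: p_a; rewrite -logn_gt0 logn_eq0.
Qed.

End FactorMatrix.

Lemma exists_small_prime_cover (A : seq nat) (B : seq int) (g : nat) :
  {in A, forall a, (0 < a)%N} -> {in A, forall a, (g %| a)%N} ->
  {in A, forall a, exists b b' : int, [/\ b \in B, b' \in B & a%:Z = b * b']} ->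
  exists S : seq nat, [/\ {subset S <= A}, (size S <= size B)%N &
    forall a p, a \in A -> p \in primes (a %/ g) ->
      exists2 a', a' \in S & p \in primes (a' %/ g)].
Proof.
move=> A_gt0 g_dvdA A_BB.
have /fin_all_exists[f A_factor] : forall i : 'I_(size A),
    exists jj : 'I_(size B) * 'I_(size B), (nth 0%N A i)%:Z = B`_jj.1 * B`_jj.2.
  move=> i; have [b [b' [bB b'B ->]]] := A_BB _ (mem_nth 0%N (ltn_ord i)).
  have [jb jb'] : (index b B < size B)%N /\ (index b' B < size B)%N.
    by rewrite !index_mem.
  by exists (Ordinal jb, Ordinal jb'); rewrite /= !nth_index.
exists (pivot_elements f); split.
- exact: pivot_elements_sub.
- exact: size_pivot_elements.
- by move=> a p; apply: (pivot_elements_cover A_gt0 g_dvdA A_factor).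
Qed.

Local Close Scope ring_scope.
Local Open Scope R_scope.

Lemma INR_sum_le (I : eqType) (r : seq I) (h : I -> nat) (C : R) :
  (forall i, i \in r -> INR (h i) <= C) ->
  INR (\sum_(i <- r) h i) <= INR (size r) * C.
Proof.
elim: r => [|i r IHr] le_C; first by rewrite big_nil /=; lra.
rewrite big_cons (plus_INR (h i)) [size _]/= S_INR Rmult_plus_distr_r Rmult_1_l.
have := le_C i (mem_head _ _).
have := IHr (fun j jr => le_C j (mem_behead (s:=i :: r) jr)); lra.
Qed.

Lemma omega_prod_le (A : seq nat) (B : seq int) (g : nat) (x C : R) :
  {in A, forall a, (0 < a)%N} -> {in A, forall a, (g %| a)%N} ->
  {in A, forall a, exists b b' : int, [/\ b \in B, b' \in B & (a%:Z = b * b')%R]} ->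
  0 <= C -> {in A, forall a, INR (omega (a %/ g) x) <= C} ->
  INR (omega (\prod_(a <- A) (a %/ g)) x) <= INR (size B) * C.
Proof.
move=> A_gt0 g_dvdA A_BB C_ge0 le_C.
have [S [sub_SA size_S cover]] := exists_small_prime_cover A_gt0 g_dvdA A_BB.
apply: (Rle_trans _ (INR (\sum_(a <- S) omega (a %/ g) x))).
  apply/le_INR/leP/omega_le_sum => p /mem_primes_prod[a aA p_a].
  exact: cover p_a.
apply: Rle_trans (INR_sum_le (fun a aS => le_C a (sub_SA a aS))) _.
by apply: Rmult_le_compat_r => //; apply/le_INR/leP.
Qed.

Lemma gcd_seq_dvd (A : seq nat) : {in A, forall a, (gcd_seq A %| a)%N}.
Proof. by move=> a aA; rewrite /gcd_seq (big_rem a) //= dvdn_gcdl. Qed.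

Theorem proposition1 :
  forall K1 K2 : R, Rlt 0 K1 -> Rlt 0 K2 ->
  exists c : R, Rlt 0 c /\
    forall (A : seq nat) (B : seq int) (M : R),
      uniq A -> all (fun a => (0 < a)%N) A -> uniq B ->
      (forall a, a \in A ->
         Rlt (INR (a %/ gcd_seq A)) (Rpower (INR (size A)) K1)) ->
      (forall a, a \in A ->
         exists b b' : int, [/\ b \in B, b' \in B & (a%:Z = b * b')%R]) ->
      Rle M (INR (omega (\prod_(a <- A) (a %/ gcd_seq A))
                        (Rmult K2 (INR (size A))))) ->
      Rle (Rmult c M) (INR (size B)).
Proof.
move=> K1 K2 K1_gt0 K2_gt0.
have := omega_bound_ge K2 (Rlt_le _ _ K1_gt0); set C := omega_bound K1 K2 => two_K1_le_C.
have C_ge0 : 0 <= C by lra.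
exists (/ (C + 1)); split; first by apply: Rinv_0_lt_compat; lra.
move=> A B M _ /allP A_gt0 _ small A_BB le_M.
have le_size_B : M <= INR (size B) * C.
  apply: Rle_trans le_M (omega_prod_le A_gt0 (@gcd_seq_dvd A) A_BB C_ge0 _).
  move=> a aA; have g_gt0 := dvdn_gt0 (A_gt0 _ aA) (gcd_seq_dvd aA).
  apply: omega_le_omega_bound K1_gt0 K2_gt0 _ _ (small _ aA).
  - by case: (A) aA.
  - by rewrite divn_gt0 // dvdn_leq ?(A_gt0 _ aA) ?(gcd_seq_dvd aA).
have := pos_INR (size B); have := Rinv_0_lt_compat (C + 1) ltac:(lra).
have : / (C + 1) * (C + 1) = 1 by field; lra.
nra.
Qed.
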